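(* Let $G=(V,E)$ be a graph with $|V|\ge d+1$, fix distinct vertices $v_1,\dots,v_d$ and the space $X_{G,d}$. Let $p\in X_{G,d}$ be such that $p(v_1),\dots,p(v_d)$ are affinely independent. Then the restriction of the linear map $R(G,p):(\mathbb{C}^d)^V\to\mathbb{C}^E$ to the linear subspace $X_{G,d}$ has rank $d|V|-\binom{d+1}{2}$ if and only if $(G,p)$ is infinitesimally rigid.
   Context: On $\mathbb{C}^d$ use $\|x\|^2=\sum x_i^2$ and the bilinear dot product $x\cdot y=\sum x_iy_i$. For a graph $G=(V,E)$ with at least $d+1$ vertices and a fixed sequence of distinct vertices $v_1,\dots,v_d$, define $X_{G,d}=\{p\in(\mathbb{C}^d)^V : p_j(v_k)=0 \text{ for all } 1\le k\le j\le d\}$, where $p_j(v)$ is the $j$-th coordinate of $p(v)$. The rigidity matrix $R(G,p)$ is the $|E|\times d|V|$ matrix whose row for edge $uv$ has $p(u)-p(v)$ in the $d$ columns of $u$, $p(v)-p(u)$ in the $d$ columns of $v$, and zeros elsewhere (it is the Jacobian at $p$ of $p\mapsto(\tfrac12\|p(v)-p(w)\|^2)_{vw\in E}$). The framework $(G,p)$ is infinitesimally rigid if $\operatorname{rank}R(G,p)=d|V|-\binom{d+1}{2}$, or $G=K_n$ with $n\le d+1$ and the points $p(v)$ affinely independent. *)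

From HB Require Import structures.
From mathcomp Require Import all_boot all_order all_algebra.
From mathcomp Require Import complex.
From mathcomp Require Import Rstruct.
Set Implicit Arguments. Unset Strict Implicit. Unset Printing Implicit Defensive.
Import Order.TTheory GRing.Theory Num.Theory.
Local Open Scope ring_scope.

Definition CC : fieldType := complex Rdefinitions.R.

Section Rigidity.
Variables (n d : nat).

(* Graphs: vertex set 'I_n, a (symmetric, irreflexive) edge relation e.
   Configurations p : 'M[CC]_(n, d); p(w) is the row  row w p  and
   p_j(w) is the entry  p w j. *)

Definition simple_graph (e : rel 'I_n) : Prop :=
  symmetric e /\ irreflexive e.

Definition edges (e : rel 'I_n) : {set 'I_n * 'I_n} :=
  [set x : 'I_n * 'I_n | (x.1 < x.2)%N && e x.1 x.2].

(* The row of R(G,p) for the edge uw, displayed as an n x d matrix (one row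
   per vertex): p(u)-p(w) in the block of u, p(w)-p(u) in the block of w,
   zero elsewhere. *)
Definition edge_row (p : 'M[CC]_(n, d)) (x : 'I_n * 'I_n) : 'M[CC]_(n, d) :=
  \matrix_(z, j) (if z == x.1 then p x.1 j - p x.2 j
                  else if z == x.2 then p x.2 j - p x.1 j else 0).

Definition rigidity_matrix (e : rel 'I_n) (p : 'M[CC]_(n, d))
  : 'M[CC]_(#|edges e|, n * d) :=
  \matrix_(k < #|edges e|) mxvec (edge_row p (@enum_val _ (mem (edges e)) k)).

(* X_{G,d}: p_j(v_k) = 0 for all k <= j (indices 0-based here). *)
Definition in_X (v : 'I_d -> 'I_n) (p : 'M[CC]_(n, d)) : Prop :=
  forall k j : 'I_d, (k <= j)%N -> p (v k) j = 0.

Definition X_mask (v : 'I_d -> 'I_n) : 'M[CC]_(n, d) :=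
  \matrix_(z, j) (if [exists k : 'I_d, (z == v k) && (k <= j)%N] then 0 else 1).

(* A matrix (in mxvec layout) whose row space is exactly X_{G,d}. *)
Definition X_mx (v : 'I_d -> 'I_n) : 'M[CC]_(n * d) :=
  diag_mx (mxvec (X_mask v)).

(* Rank of the restriction of a linear map (given by A acting on column
   vectors) to the subspace spanned by the rows of S:
   dim A(rowspace S) = rank (S A^T). *)
Definition restricted_rank m k (A : 'M[CC]_(m, k)) (S : 'M[CC]_k) : nat :=
  \rank (S *m A^T).

End Rigidity.

Definition affinely_independent m d (q : 'M[CC]_(m, d)) : bool :=
  row_free (row_mx q (const_mx 1 : 'cV[CC]_m)).

Definition complete_graph n (e : rel 'I_n) : Prop :=
  forall u w : 'I_n, e u w = (u != w).

Definition inf_rigid n d (e : rel 'I_n) (p : 'M[CC]_(n, d)) : Prop :=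
  \rank (rigidity_matrix e p) = (n * d - 'C(d.+1, 2))%N
  \/ (complete_graph e /\ (n <= d.+1)%N /\ affinely_independent p).

From HB Require Import structures.
From mathcomp Require Import all_boot all_order all_algebra.
From mathcomp Require Import complex Rstruct.
From mathcomp Require Import ring zify.
Set Implicit Arguments. Unset Strict Implicit. Unset Printing Implicit Defensive.
Import Order.TTheory GRing.Theory Num.Theory.
Local Open Scope ring_scope.

(* Trivial infinitesimal motions (a translation plus p S with S skew) lie in
   the kernel of R(G,p). Every x in (C^d)^V is congruent to an element of
   X_{G,d} modulo trivial motions: a translation clears the row of v_1, and
   for k >= 2 the rotations in the planes (k-1, j), j >= k, clear the row of
   v_k without disturbing v_1, ..., v_(k-1), after division by the pivot
   p_(k-1)(v_k). The pivots are the subdiagonal of the strictly triangular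
   matrix of the p(v_k), and they are nonzero since these points are affinely
   independent. Hence R(G,p) has the same rank on X_{G,d} as on the whole
   space. In the exceptional case G = K_(d+1) of infinitesimal rigidity,
   affine independence makes R(G,p) row-free, of rank C(d+1,2), which is
   (d+1)d - C(d+1,2). *)

Lemma skew_form0 (R : numDomainType) m (u : 'rV[R]_m) (S : 'M[R]_m) :
  S^T = - S -> u *m S *m u^T = 0.
Proof.
move=> skewS; set q := u *m S *m u^T.
have qN : q = - q.
  rewrite -{1}[q]trmxK [q^T]mx11_scalar tr_scalar_mx -mx11_scalar.
  rewrite !trmx_mul trmxK skewS.
  by rewrite mulNmx mulmxN mulmxA.
apply/matrixP => i j; rewrite !ord1 [RHS]mxE; apply/eqP.
have /eqP : q 0 0 *+ 2 = 0 by rewrite mulr2n {1}qN mxE addNr.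
by rewrite mulrn_eq0.
Qed.

Section TrivialMotions.
Variables (n d : nat) (p : 'M[CC]_(n, d)).

Definition trivial_motion (M : 'M[CC]_(n, d)) : Prop :=
  forall a b : 'I_n, (row a M - row b M) *m (row a p - row b p)^T = 0.

Lemma trivial_motion0 : trivial_motion 0.
Proof. by move=> a b; rewrite !row0 subrr mul0mx. Qed.

Lemma trivial_motionD M N :
  trivial_motion M -> trivial_motion N -> trivial_motion (M + N).
Proof.
move=> tM tN a b; rewrite ![row _ (_ + _)]linearD /= opprD addrACA mulmxDl.
by rewrite tM tN addr0.
Qed.

Lemma trivial_motion_translation (t : 'rV[CC]_d) :
  trivial_motion (\matrix_(w < n) t).
Proof. by move=> a b; rewrite !rowK subrr mul0mx. Qed.

Lemma trivial_motion_skew (S : 'M[CC]_d) :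
  S^T = - S -> trivial_motion (p *m S).
Proof. by move=> skewS a b; rewrite !row_mul -mulmxBl skew_form0. Qed.

End TrivialMotions.

Section RigidityMatrix.
Variables (n d : nat) (e : rel 'I_n) (p : 'M[CC]_(n, d)).

Definition edge_vec (x : 'I_n * 'I_n) : 'rV[CC]_n :=
  delta_mx 0 x.1 - delta_mx 0 x.2.

Lemma edge_vec_mul x m (M : 'M[CC]_(n, m)) :
  edge_vec x *m M = row x.1 M - row x.2 M.
Proof. by rewrite mulmxBl -!rowE. Qed.

Lemma edge_vec_mul_ones x : edge_vec x *m (const_mx 1 : 'cV[CC]_n) = 0.
Proof. by rewrite edge_vec_mul !row_const subrr. Qed.

Lemma edge_rowE x : edge_row p x = (edge_vec x)^T *m (edge_vec x *m p).
Proof.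
apply/matrixP => z j; rewrite edge_vec_mul !mxE big_ord1 !mxE /=.
case: (eqVneq z x.1) => [->|_]; case: (eqVneq _ x.2) => [e12|_] /=;
  rewrite ?e12; ring.
Qed.

Lemma trivial_motion_ker M :
  trivial_motion p M -> mxvec M *m (rigidity_matrix e p)^T = 0.
Proof.
move=> tM; apply: trmx_inj; rewrite trmx_mul trmxK trmx0.
apply/row_matrixP => k; rewrite row_mul rowK row0 edge_rowE mxvec_dotmul.
by rewrite !edge_vec_mul tM.
Qed.

Lemma edge_laplacian_entry (x y : 'I_n * 'I_n) :
  (x.1 < x.2)%N -> (y.1 < y.2)%N ->
  ((edge_vec y)^T *m edge_vec y) x.1 x.2 = - (x == y)%:R.
Proof.
case: x y => [a b] [a' b'] /= ltab ltab'.
rewrite !mxE big_ord1 !mxE /= xpair_eqE -!val_eqE /=.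
by do 4!case: eqP => ? /=; try (exfalso; lia); ring.
Qed.

Lemma row_free_rigidity_matrix :
  affinely_independent p -> row_free (rigidity_matrix e p).
Proof.
move=> aff; apply/inj_row_free => u uR.
pose x k := @enum_val _ (mem (edges e)) k.
have x_lt k : ((x k).1 < (x k).2)%N.
  by have := enum_valP k; rewrite inE => /andP[].
pose L := \sum_k u 0 k *: ((edge_vec (x k))^T *m edge_vec (x k)).
have LpE : mxvec (L *m p) = u *m rigidity_matrix e p.
  rewrite mulmx_sum_row mulmx_suml linear_sum; apply: eq_bigr => k _.
  by rewrite rowK -scalemxAl -mulmxA -edge_rowE linearZ.
have L0 : L = 0.
  apply: (row_free_inj aff); rewrite mul0mx mul_mx_row.
  have -> : L *m p = 0 by apply: (can_inj mxvecK); rewrite LpE uR linear0.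
  rewrite mulmx_suml big1 ?row_mx0 // => k _.
  by rewrite -scalemxAl -mulmxA edge_vec_mul_ones mulmx0 scaler0.
apply/rowP => k; move/matrixP/(_ (x k).1 (x k).2): L0.
rewrite summxE (bigD1 k) //= big1 => [|k' nk'].
  rewrite mxE edge_laplacian_entry // eqxx mulrN1 addr0 !mxE.
  by move/eqP; rewrite oppr_eq0 => /eqP.
rewrite mxE edge_laplacian_entry // (inj_eq enum_val_inj) eq_sym (negPf nk').
by rewrite oppr0 mulr0.
Qed.

End RigidityMatrix.

Lemma mxrankM_addsmx_ker_full (F : fieldType) m k l
    (X : 'M[F]_(m, k)) (B : 'M[F]_(k, l)) :
  (1%:M <= X + kermx B)%MS -> \rank (X *m B) = \rank B.
Proof.
move=> full; apply/eqP; rewrite eqn_leq mxrankM_maxr /=; apply: mxrankS.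
have := submxMr B full; rewrite mul1mx addsmxMr mulmx_ker.
by move/submx_trans; apply; rewrite addsmx0.
Qed.

Lemma in_X_submx n d (v : 'I_d -> 'I_n) (x : 'M[CC]_(n, d)) :
  in_X v x -> (mxvec x <= X_mx v)%MS.
Proof.
move=> Xx; suff -> : mxvec x = mxvec x *m X_mx v by exact: submxMl.
apply/rowP => i; case/mxvec_indexP: i => z j.
rewrite mul_mx_diag mxE !mxvecE mxE.
by case: existsP => [[k /andP[/eqP-> le_kj]] | _]; rewrite ?Xx ?mul0r ?mulr1.
Qed.

Section Decomposition.
Variables (n d : nat) (v : 'I_d -> 'I_n) (p : 'M[CC]_(n, d)).
Hypothesis pX : in_X v p.
Hypothesis pivot_neq0 : forall k i : 'I_d, k = i.+1 :> nat -> p (v k) i != 0.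

Definition in_X_upto m (x : 'M[CC]_(n, d)) : Prop :=
  forall k j : 'I_d, (k < m)%N -> (k <= j)%N -> x (v k) j = 0.

Lemma clear_first_row (k : 'I_d) x : k = 0 :> nat ->
  exists2 y, trivial_motion p y & in_X_upto 1 (x - y).
Proof.
move=> k0; exists (\matrix_(w < n) row (v k) x).
  exact: trivial_motion_translation.
move=> k' j; rewrite ltnS leqn0 => /eqP k'0 _.
by rewrite (_ : k' = k) ?mxE ?subrr //; apply: val_inj; rewrite /= k0 k'0.
Qed.

Lemma clear_next_row (i k : 'I_d) x : k = i.+1 :> nat -> in_X_upto k x ->
  exists2 y, trivial_motion p y & in_X_upto k.+1 (x - y).
Proof.
move=> ki Xx; pose c := p (v k) i.
pose r : 'rV_d := \row_l ((k <= l)%N%:R * x (v k) l / c).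
pose A := delta_mx i 0 *m r.
exists (p *m (A - A^T)).
  by apply: trivial_motion_skew; rewrite linearB /= trmxK opprB.
have pSE w l : (p *m (A - A^T)) w l =
    p w i * r 0 l - (\sum_a p w a * r 0 a) * (l == i)%:R.
  rewrite mulmxBr trmx_mul trmx_delta !mulmxA -colE !mxE !big_ord1 !mxE.
  by under eq_bigr do rewrite mxE.
have r_lt (l : 'I_d) : (l < k)%N -> r 0 l = 0.
  by move=> lt_lk; rewrite mxE leqNgt lt_lk !mul0r.
have row_low w : (forall l : 'I_d, (i <= l)%N -> p w l = 0) ->
    row w (p *m (A - A^T)) = 0.
  move=> pw; apply/rowP => l; rewrite [LHS]mxE [RHS]mxE pSE pw // mul0r sub0r.
  rewrite big1 ?mul0r ?oppr0 //.
  move=> a _; case: (ltnP a k) => [/r_lt -> | le_ka].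
    by rewrite mulr0.
  by rewrite pw ?mul0r //; lia.
move=> k' j; rewrite ltnS leq_eqVlt.
case/orP=> [/eqP/val_inj-> le_kj | lt_k'k le_k'j].
  have ne_ji : j != i by apply: contraTneq le_kj => ->; rewrite ki ltnn.
  rewrite 2!mxE pSE (negPf ne_ji) mulr0 subr0 mxE le_kj mul1r mulrCA.
  by rewrite divff ?mulr1 ?subrr //; apply: pivot_neq0.
have := congr1 (fun u : 'rV_d => u 0 j) (row_low (v k') _).
rewrite !mxE Xx // => ->; rewrite ?subr0 // => l le_il; apply: pX; lia.
Qed.

Lemma in_X_decomposition x : exists2 y, trivial_motion p y & in_X v (x - y).
Proof.
suff /(_ d (leqnn d)) [y ty Xy] : forall m, (m <= d)%N ->
    exists2 y, trivial_motion p y & in_X_upto m (x - y).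
  by exists y => // k j; apply: Xy.
elim=> [_ | m IH lt_md]; first by exists 0; [exact: trivial_motion0 | case].
have [y ty Xy] := IH (ltnW lt_md).
have [y' ty' Xy'] :
    exists2 y', trivial_motion p y' & in_X_upto m.+1 (x - y - y').
  case: m lt_md {IH} Xy => [|i] lt_md Xy.
    exact: (@clear_first_row (Ordinal lt_md)).
  exact: (@clear_next_row (Ordinal (ltnW lt_md)) (Ordinal lt_md)).
by exists (y + y'); [exact: trivial_motionD | rewrite opprD addrA].
Qed.

End Decomposition.

Lemma affinely_independent_subdiag_neq0 d (q : 'M[CC]_d) :
  (forall k j : 'I_d, (k <= j)%N -> q k j = 0) -> affinely_independent q ->
  forall k j : 'I_d, k = j.+1 :> nat -> q k j != 0.
Proof.
case: d q => [|d] q qlow aff k j kj; first by case: k kj.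
apply/negP => /eqP qkj0.
(* [1 | q] with the last column of q, which is zero, dropped: a lower
   triangular matrix with diagonal 1, q 1 0, q 2 1, ... *)
pose T : 'M[CC]_d.+1 :=
  \matrix_(k', l) (if l == ord0 then 1 else q k' (inord l.-1)).
have T_trig : is_trig_mx T.
  apply/is_trig_mxP => k' l lt_k'l; rewrite mxE ifN; last first.
    by rewrite -val_eqE /=; lia.
  rewrite qlow // inordK ?(leq_ltn_trans (leq_pred l)) //.
  by rewrite -ltnS (ltn_predK lt_k'l).
have /det0P [u u_neq0 uT] : \det T == 0.
  rewrite det_trig // (bigD1 k) //= mxE ifN; last by rewrite -val_eqE /= kj.
  rewrite (_ : inord _ = j) ?qkj0 ?mul0r //.
  by apply: val_inj; rewrite /= kj inordK ?ltn_ord.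
have uT0 l : \sum_k' u 0 k' * T k' l = 0 by move/rowP/(_ l): uT; rewrite !mxE.
move/negP: u_neq0; apply; apply/eqP/(row_free_inj aff).
rewrite mul0mx mul_mx_row -row_mx0; congr row_mx; apply/rowP => l; rewrite !mxE.
  case: (ltnP l d) => [lt_ld | le_dl]; last first.
    by rewrite big1 // => k' _; rewrite qlow ?mulr0 // (leq_trans (leq_ord k')).
  rewrite -[RHS](uT0 (inord l.+1)); apply: eq_bigr => k' _; rewrite mxE ifN.
    by congr (_ * q _ _); apply: val_inj; rewrite /= !inordK ?ltnS // ltnW.
  by rewrite -val_eqE /= inordK.
by rewrite -[RHS](uT0 ord0); apply: eq_bigr => k' _; rewrite !mxE.
Qed.

Lemma X_mx_addsmx_ker_full n d (e : rel 'I_n) (v : 'I_d -> 'I_n)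
    (p : 'M[CC]_(n, d)) :
  in_X v p -> (forall k i : 'I_d, k = i.+1 :> nat -> p (v k) i != 0) ->
  (1%:M <= X_mx v + kermx (rigidity_matrix e p)^T)%MS.
Proof.
move=> pX pivot_neq0; apply/row_subP => i; rewrite -[row i _]vec_mxK.
have [y ty Xy] := in_X_decomposition pX pivot_neq0 (vec_mx (row i 1%:M)).
rewrite -(subrK y (vec_mx _)) linearD /=; apply: addmx_sub_adds.
  exact: in_X_submx.
by apply/sub_kermxP; apply: trivial_motion_ker.
Qed.

Lemma sum_ltn_ord n b : (b <= n)%N -> (\sum_(a < n) (a < b))%N = b.
Proof.
move=> le_bn; rewrite -(subnKC le_bn) big_split_ord /=.
rewrite [X in (_ + X)%N]big1 => [|a _]; last by rewrite ltnNge leq_addr.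
rewrite addn0 (eq_bigr (fun=> 1%N)) => [|a _]; last by rewrite ltn_ord.
by rewrite sum1_card card_ord.
Qed.

Lemma card_edges_complete n (e : rel 'I_n) :
  complete_graph e -> #|edges e| = 'C(n, 2).
Proof.
move=> eK; rewrite -bin2_sum big_mkord -sum1_card.
transitivity (\sum_(a < n) \sum_(b < n) (a < b))%N.
  rewrite pair_bigA big_mkcond /=; apply: eq_bigr => -[a b] _.
  by rewrite inE eK -val_eqE /=; case: ltngtP.
by rewrite exchange_big; apply: eq_bigr => b _; apply: sum_ltn_ord; apply: ltnW.
Qed.

Lemma bin2_double n : ('C(n, 2).*2 = n * n.-1)%N.
Proof. by rewrite bin2 even_halfK // oddM; case: n => //= n; rewrite andNb. Qed.

Lemma restricted_rank_X_mx n d (e : rel 'I_n) (v : 'I_d -> 'I_n)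
    (p : 'M[CC]_(n, d)) :
  in_X v p -> affinely_independent (\matrix_(k < d) row (v k) p) ->
  restricted_rank (rigidity_matrix e p) (X_mx v) = \rank (rigidity_matrix e p).
Proof.
move=> pX aff; rewrite /restricted_rank mxrankM_addsmx_ker_full ?mxrank_tr //.
apply: X_mx_addsmx_ker_full => // k i ki.
have := affinely_independent_subdiag_neq0 _ aff ki; rewrite !mxE; apply.
by move=> k' j le_k'j; rewrite !mxE pX.
Qed.

Theorem lemma2p6 (n d : nat) (e : rel 'I_n) (v : 'I_d -> 'I_n)
    (p : 'M[CC]_(n, d)) :
  simple_graph e ->
  (d.+1 <= n)%N ->
  injective v ->
  in_X v p ->
  affinely_independent (\matrix_(k < d) row (v k) p) ->
  (restricted_rank (rigidity_matrix e p) (X_mx v) = (n * d - 'C(d.+1, 2))%N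
   <-> inf_rigid e p).
Proof.
move=> _ le_d1n _ pX aff; rewrite restricted_rank_X_mx //.
split=> [|[// | [eK [le_nd1 affp]]]]; first by left.
rewrite (eqP (row_free_rigidity_matrix e affp)) card_edges_complete //.
have -> : n = d.+1 by apply/eqP; rewrite eqn_leq le_nd1.
by rewrite -bin2_double -addnn addnK.
Qed.
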